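(* Best-response dynamics for simultaneous plurality voting over multiple issues need not converge, even when all issues are binary. Precisely: there exist $p=2$ binary issues, $n=3$ agents with strict rankings $R_1,R_2,R_3$ over $\{0,1\}^2$, and an initial vote profile (indeed, the truthful profile) from which there is an infinite sequence of best-response steps. One instance: $R_1:(0,1)\succ(1,1)\succ(1,0)\succ(0,0)$, $R_2:(0,0)\succ(0,1)\succ(1,1)\succ(1,0)$, $R_3:(1,0)\succ(1,1)\succ(0,0)\succ(0,1)$, starting from the truthful profile $((0,1),(0,0),(1,0))$. From every profile on this cycle, every available best-response step lies on the cycle, so no scheduler yields convergence.
   Context: Issues $\mathcal P=\{1,\dots,p\}$, each with a finite candidate set $D_i$; alternatives are $\mathcal D=\prod_{i} D_i$. Issues are binary if $D_i=\{0,1\}$ for all $i$. Each of $n$ agents $j$ has a strict linear order $R_j$ (written $\succ_j$) over $\mathcal D$. A vote profile is $a=(a_1,\dots,a_n)\in\mathcal D^n$ with $a_j=(a_j^1,\dots,a_j^p)$. The truthful profile has each agent voting for their top-ranked alternative. Plurality outcome: on issue $i$ the score of $c\in D_i$ is $s^i(c;a)=|\{j: a^i_j=c\}|$, and $f^i(a)$ is the candidate of maximum score, with ties broken lexicographically (for $\{0,1\}$, $0$ beats $1$ in a tie). The outcome is $f(a)=(f^1(a),\dots,f^p(a))$. Iterative voting: starting from an initial profile, at each round a scheduler picks an agent $j$ and an issue $i$ for which $j$ has an improvement step. The agent changes only their vote on issue $i$, and all other votes stay unchanged. A best-response step for $j$ on issue $i$ from $a$ replaces $a_j$ by the vote $\hat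 a_j$ (differing from $a_j$ only on issue $i$) whose outcome $f(a_{-j},\hat a_j)$ is $j$'s most preferred among all such votes. This step is taken only if that outcome is strictly better for $j$ than $f(a)$. A profile with no improvement step for any agent is an equilibrium. The dynamics converge if every improvement sequence is finite from every initial profile. *)

(* Binary issues: candidate 0 is [false], candidate 1 is [true]. *)
From mathcomp Require Import all_boot.
Set Implicit Arguments. Unset Strict Implicit. Unset Printing Implicit Defensive.

Definition alt (p : nat) := {ffun 'I_p -> bool}.
Definition profile (p n : nat) := {ffun 'I_n -> alt p}.

(* A strict linear order on a finite type; [R x y] reads "x is strictly preferred to y". *)
Definition strict_linear_order (T : finType) (R : rel T) : Prop :=
  (forall x, ~~ R x x) /\
  (forall x y z, R x y -> R y z -> R x z) /\
  (forall x y, x != y -> R x y || R y x).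

Definition score p n (a : profile p n) (i : 'I_p) (c : bool) : nat :=
  #|[set j : 'I_n | a j i == c]|.

(* Plurality winner on issue i; ties broken lexicographically (0 beats 1). *)
Definition plur_issue p n (a : profile p n) (i : 'I_p) : bool :=
  score a i false < score a i true.

Definition outcome p n (a : profile p n) : alt p := [ffun i => plur_issue a i].

Definition upd p n (a : profile p n) (j : 'I_n) (v : alt p) : profile p n :=
  [ffun k => if k == j then v else a k].

Definition differs_only_on p (i : 'I_p) (v w : alt p) : Prop :=
  forall k, k != i -> v k = w k.

Definition br_step p n (R : 'I_n -> rel (alt p)) (j : 'I_n) (i : 'I_p)
    (a b : profile p n) : Prop :=
  exists v : alt p,
    [/\ differs_only_on i v (a j),
        b = upd a j v,
        (forall w : alt p, differs_only_on i w (a j) ->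
            outcome (upd a j w) = outcome b \/ R j (outcome b) (outcome (upd a j w)))
      & R j (outcome b) (outcome a)].

Definition some_br_step p n (R : 'I_n -> rel (alt p)) (a b : profile p n) : Prop :=
  exists j i, br_step R j i a b.

Definition truthful p n (R : 'I_n -> rel (alt p)) (a : profile p n) : Prop :=
  forall j (x : alt p), x != a j -> R j (a j) x.

Inductive br_reachable p n (R : 'I_n -> rel (alt p)) (a : profile p n) :
    profile p n -> Prop :=
  | br_refl : br_reachable R a a
  | br_next b c : br_reachable R a b -> some_br_step R b c -> br_reachable R a c.

From mathcomp Require Import all_boot.
Set Implicit Arguments. Unset Strict Implicit. Unset Printing Implicit Defensive.

(* Running around the cycle gives an infinite sequence,
      and by induction every profile reachable from c0 lies on the cycle and
      hence admits a further step. *)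

Section BinaryBestResponse.
Variables (p n : nat).

Definition flip (i : 'I_p) (v : alt p) : alt p :=
  [ffun k => if k == i then ~~ v k else v k].

Lemma differs_only_on_flip i v : differs_only_on i (flip i v) v.
Proof. by move=> k /negbTE nki; rewrite ffunE nki. Qed.

Lemma differs_only_on_binary i w v :
  differs_only_on i w v -> w = v \/ w = flip i v.
Proof.
move=> dwv; have [wvi | wvi] := eqVneq (w i) (v i); [left | right];
  apply/ffunP => k; rewrite ?ffunE; have [->|nki] := eqVneq k i => //;
  try exact: dwv.
by move: wvi; case: (w i); case: (v i).
Qed.

Lemma upd_id (a : profile p n) j : upd a j (a j) = a.
Proof. by apply/ffunP => k; rewrite ffunE; case: eqP => [->|]. Qed.

Lemma br_step_flipP (R : 'I_n -> rel (alt p)) j i (a b : profile p n) :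
  (forall x, ~~ R j x x) ->
  br_step R j i a b <->
  b = upd a j (flip i (a j)) /\ R j (outcome b) (outcome a).
Proof.
move=> irr; split.
- case=> v [/differs_only_on_binary [->|->] -> _ better] //.
  by move: better; rewrite upd_id (negbTE (irr _)).
- case=> -> better; exists (flip i (a j)); split => //.
    exact: differs_only_on_flip.
  move=> w /differs_only_on_binary [->|->]; [right | by left].
  by rewrite upd_id.
Qed.

Lemma br_reachable_inv (R : 'I_n -> rel (alt p)) (P : profile p n -> Prop) a0 :
  P a0 -> (forall a b, P a -> some_br_step R a b -> P b) ->
  forall a, br_reachable R a0 a -> P a.
Proof. by move=> P0 Pstep a; elim=> // b c _ Pb; exact: Pstep. Qed.

Definition rank_rel (rk : 'I_n -> alt p -> nat) (j : 'I_n) : rel (alt p) :=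
  [rel x y | rk j x < rk j y].

Lemma truthful_rank (rk : 'I_n -> alt p -> nat) (a : profile p n) :
  (forall j, injective (rk j)) -> (forall j, rk j (a j) = 0) ->
  truthful (rank_rel rk) a.
Proof.
move=> rk_inj top j x xa; rewrite /rank_rel /= top lt0n -(top j).
by apply: contra xa => /eqP/rk_inj ->.
Qed.

End BinaryBestResponse.

Lemma rank_order (T : finType) (rk : T -> nat) :
  injective rk -> strict_linear_order [rel x y | rk x < rk y].
Proof.
move=> rk_inj; split; [|split] => [x | x y z | x y xy] /=.
- by rewrite ltnn.
- exact: ltn_trans.
- by rewrite -neq_ltn (inj_eq rk_inj).
Qed.

Lemma periodic_run (T : Type) (e : T -> T -> Prop) (x0 : T) (s : seq T) :
  0 < size s ->
  (forall k, k < size s -> e (nth x0 s k) (nth x0 s (k.+1 %% size s))) ->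
  forall t, e (nth x0 s (t %% size s)) (nth x0 s (t.+1 %% size s)).
Proof.
move=> s_gt0 steps t.
have -> : t.+1 %% size s = (t %% size s).+1 %% size s.
  by rewrite -addn1 -modnDml addn1.
by apply: steps; rewrite ltn_mod.
Qed.

Definition i0 : 'I_2 := ord0.
Definition i1 : 'I_2 := @Ordinal 2 1 isT.
Definition j0 : 'I_3 := ord0.
Definition j1 : 'I_3 := @Ordinal 3 1 isT.
Definition j2 : 'I_3 := @Ordinal 3 2 isT.

Lemma ord2P (i : 'I_2) : i = i0 \/ i = i1.
Proof. by case: i => [[|[|m]] lt_m] //; [left | right]; apply: val_inj. Qed.

Lemma ord3P (j : 'I_3) : [\/ j = j0, j = j1 | j = j2].
Proof.
by case: j => [[|[|[|m]]] lt_m] //; [apply: Or31 | apply: Or32 | apply: Or33];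
  apply: val_inj.
Qed.

Definition maj3 (x y z : bool) := [|| x && y, x && z | y && z].

Lemma outcome3 p (a : profile p 3) i :
  outcome a i = maj3 (a j0 i) (a j1 i) (a j2 i).
Proof.
rewrite ffunE /plur_issue /score -!sum1_card !(big_mkcond (fun j => j \in _)).
rewrite !big_ord_recl !big_ord0 !inE.
have -> : lift ord0 ord0 = j1 by apply: val_inj.
have -> : lift ord0 (lift ord0 ord0) = j2 by apply: val_inj.
by case: (a j0 i); case: (a j1 i); case: (a j2 i).
Qed.

Definition alt2 (x y : bool) : alt 2 := [ffun i => if i == i0 then x else y].
Definition prof3 (u v w : alt 2) : profile 2 3 :=
  [ffun j => if j == j0 then u else if j == j1 then v else w].

Lemma alt2_i0 x y : alt2 x y i0 = x. Proof. by rewrite ffunE. Qed.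
Lemma alt2_i1 x y : alt2 x y i1 = y. Proof. by rewrite ffunE. Qed.

Lemma alt2_eta (x : alt 2) : x = alt2 (x i0) (x i1).
Proof. by apply/ffunP => i; rewrite ffunE; case: (ord2P i) => ->. Qed.

Lemma prof3_j0 u v w : prof3 u v w j0 = u. Proof. by rewrite ffunE. Qed.
Lemma prof3_j1 u v w : prof3 u v w j1 = v. Proof. by rewrite ffunE. Qed.
Lemma prof3_j2 u v w : prof3 u v w j2 = w. Proof. by rewrite ffunE. Qed.

Lemma flip_i0 x y : flip i0 (alt2 x y) = alt2 (~~ x) y.
Proof. by apply/ffunP => i; rewrite !ffunE; case: (ord2P i) => ->. Qed.
Lemma flip_i1 x y : flip i1 (alt2 x y) = alt2 x (~~ y).
Proof. by apply/ffunP => i; rewrite !ffunE; case: (ord2P i) => ->. Qed.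

Lemma upd_j0 u v w x : upd (prof3 u v w) j0 x = prof3 x v w.
Proof. by apply/ffunP => k; rewrite !ffunE; case: (ord3P k) => ->. Qed.
Lemma upd_j1 u v w x : upd (prof3 u v w) j1 x = prof3 u x w.
Proof. by apply/ffunP => k; rewrite !ffunE; case: (ord3P k) => ->. Qed.
Lemma upd_j2 u v w x : upd (prof3 u v w) j2 x = prof3 u v x.
Proof. by apply/ffunP => k; rewrite !ffunE; case: (ord3P k) => ->. Qed.

Lemma outcome_prof3 u v w :
  outcome (prof3 u v w) =
  alt2 (maj3 (u i0) (v i0) (w i0)) (maj3 (u i1) (v i1) (w i1)).
Proof.
apply/ffunP => i; rewrite outcome3 !ffunE.
by case: (ord2P i) => ->.
Qed.

(* The rankings of the paper, best alternative first. *)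
Definition prefs (j : 'I_3) : seq (bool * bool) :=
  nth [::] [:: [:: (false, true); (true, true); (true, false); (false, false)];
               [:: (false, false); (false, true); (true, true); (true, false)];
               [:: (true, false); (true, true); (false, false); (false, true)]] j.

Definition rank (j : 'I_3) (x : alt 2) : nat := index (x i0, x i1) (prefs j).

Definition pref : 'I_3 -> rel (alt 2) := rank_rel rank.

(* Each ranking lists all four alternatives, so ranks are injective. *)
Lemma rank_inj j : injective (rank j).
Proof.
have all_listed xy : xy \in prefs j.
  by case: (ord3P j) => ->; case: xy => [[] []].
move=> x y /(index_inj (true, true) (all_listed _) (all_listed _)) [x0 x1].
by rewrite (alt2_eta x) (alt2_eta y) x0 x1.
Qed.

Lemma pref_irrefl j x : ~~ pref j x x.
Proof. by rewrite /pref /rank_rel /= ltnn. Qed.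

Definition c0 := prof3 (alt2 false true) (alt2 false false) (alt2 true false).
Definition c1 := prof3 (alt2 true true) (alt2 false false) (alt2 true false).
Definition c2 := prof3 (alt2 true true) (alt2 false true) (alt2 true false).
Definition c3 := prof3 (alt2 false true) (alt2 false true) (alt2 true false).

Definition cyc := [:: c0; c1; c2; c3].
Definition on_cycle (a : profile 2 3) := a = c0 \/ a = c1 \/ a = c2 \/ a = c3.

Ltac eval_profiles :=
  rewrite /pref /rank_rel /c0 /c1 /c2 /c3 ?prof3_j0 ?prof3_j1 ?prof3_j2
          ?flip_i0 ?flip_i1 ?upd_j0 ?upd_j1 ?upd_j2 ?outcome_prof3 /=
          /rank ?alt2_i0 ?alt2_i1.

Lemma flip_step (a : profile 2 3) j i :
  pref j (outcome (upd a j (flip i (a j)))) (outcome a) ->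
  some_br_step pref a (upd a j (flip i (a j))).
Proof.
by move=> better; exists j, i; apply/(br_step_flipP _ _ _ (@pref_irrefl j)).
Qed.

Lemma cycle_steps k : k < size cyc ->
  some_br_step pref (nth c0 cyc k) (nth c0 cyc (k.+1 %% size cyc)).
Proof.
case: k => [|[|[|[|k]]]] //= _.
- have -> : c1 = upd c0 j0 (flip i0 (c0 j0)) by eval_profiles.
  by apply: flip_step; eval_profiles.
- have -> : c2 = upd c1 j1 (flip i1 (c1 j1)) by eval_profiles.
  by apply: flip_step; eval_profiles.
- have -> : c3 = upd c2 j0 (flip i0 (c2 j0)) by eval_profiles.
  by apply: flip_step; eval_profiles.
- have -> : c0 = upd c3 j1 (flip i1 (c3 j1)) by eval_profiles.
  by apply: flip_step; eval_profiles.
Qed.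

(* Every best-response step from a profile on the cycle stays on it: among
   the 24 candidate flips, those that improve are exactly the cycle edges. *)
Lemma cycle_closed a b : on_cycle a -> some_br_step pref a b -> on_cycle b.
Proof.
move=> on_a [j [i /br_step_flipP[|-> better]]]; first exact: pref_irrefl.
move: better; rewrite /on_cycle.
case: on_a => [->|[->|[->|->]]]; case: (ord3P j) => ->; case: (ord2P i) => ->;
  eval_profiles; by [| auto].
Qed.

Lemma on_cycle_step a : on_cycle a -> exists b, some_br_step pref a b.
Proof.
case=> [->|[->|[->|->]]]; eexists.
- exact: (cycle_steps (k := 0)).
- exact: (cycle_steps (k := 1)).
- exact: (cycle_steps (k := 2)).
- exact: (cycle_steps (k := 3)).
Qed.

Theorem proposition1 :
  exists (R : 'I_3 -> rel (alt 2)) (a0 : profile 2 3),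
    (forall j, strict_linear_order (R j)) /\
    truthful R a0 /\
    (exists s : nat -> profile 2 3,
        s 0 = a0 /\ forall t, some_br_step R (s t) (s t.+1)) /\
    (forall a, br_reachable R a0 a -> exists b, some_br_step R a b).
Proof.
exists pref, c0; split; first by move=> j; apply: rank_order; exact: rank_inj.
split.
  apply: truthful_rank; first exact: rank_inj.
  by move=> j; case: (ord3P j) => ->; eval_profiles.
split.
  exists (fun t => nth c0 cyc (t %% size cyc)); split => //.
  exact: periodic_run cycle_steps.
move=> a reach_a; apply: on_cycle_step.
by apply: (br_reachable_inv _ cycle_closed reach_a); left.
Qed.
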